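(* Let $S=\{(a_i,b_i)\}_{i=1}^n\subset\mathbb R_{>0}\times\mathbb R_{\ge0}$ with $0<a_1<\cdots<a_n$, and let $f\in\mathbb R_{\ge0}[X]$ interpolate $S$. Then $f$ is the unique polynomial in $\mathbb R_{\ge0}[X]$ interpolating $S$ if and only if $f$ is the minimal polynomial of some proper subset $T\subsetneq S$.
   Context: $\mathbb R_{\ge0}[X]$ is the set of real polynomials with all coefficients nonnegative; $f$ interpolates a finite set $T$ of points $(a,b)$ if $f(a)=b$ for each. A finite sign sequence is $s\in\{-,0,+\}^\omega$ with finitely many nonzero entries ($\omega=\{0,1,\dots\}$); $\mathscr S$ is their set, $\mathscr S_+=\mathscr S\cap\{0,+\}^\omega$; $\mathrm{Sign}(f)$ is the sequence of signs of coefficients of $f$. $\mathrm{SC}(t)$ is the number of pairs $i<j$ with $\{t_i,t_j\}=\{-,+\}$ and $t_k=0$ for $i<k<j$. For $s\in\mathscr S_+$, $\mathfrak d(s)=\max\{\mathrm{SC}(t):t\in\mathscr S,\ t_i\in\{-,0,s_i\}\ \forall i\}$, $\mathfrak d(f)=\mathfrak d(\mathrm{Sign}(f))$. For a finite $T\subset\mathbb R_{>0}\times\mathbb R_{\ge0}$ with $\#T=m$ and pairwise distinct first coordinates, $f\in\mathbb R_{\ge0}[X]$ interpolating $T$ is the minimal polynomial of $T$ if $\mathfrak d(f)\le m$. *)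

From HB Require Import structures.
From mathcomp Require Import all_boot all_order all_algebra.
From mathcomp Require Import reals.
From Stdlib Require Import ClassicalEpsilon.
Set Implicit Arguments. Unset Strict Implicit. Unset Printing Implicit Defensive.
Import Order.TTheory GRing.Theory Num.Theory.
Local Open Scope ring_scope.

Inductive sign := Neg | Zero | Pos.

(* the maximum of a set of naturals (junk value 0 if no maximum exists) *)
Definition natmax (P : nat -> Prop) : nat :=
  epsilon (inhabits 0%N) (fun n => P n /\ forall k, P k -> (k <= n)%N).

Definition is_zero (s : sign) : bool := if s is Zero then true else false.
Definition opp_signs (s1 s2 : sign) : bool :=
  match s1, s2 with Neg, Pos | Pos, Neg => true | _, _ => false end.

(* A finite sign sequence is represented by a list; entry i is [nth Zero t i]
   (all entries beyond the list are 0). *)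
Definition SC (t : seq sign) : nat :=
  (\sum_(j < size t) \sum_(i < j)
     (opp_signs (nth Zero t i) (nth Zero t j) &&
      [forall k : 'I_j, (i < k)%N ==> is_zero (nth Zero t k)]))%N.

Definition admissible (si ti : sign) : Prop := ti = Neg \/ ti = Zero \/ ti = si.

Definition dfrak (s : seq sign) : nat :=
  natmax (fun n => exists t : seq sign,
            (forall i, admissible (nth Zero s i) (nth Zero t i)) /\ SC t = n).

Definition sgn {R : realDomainType} (x : R) : sign :=
  if x < 0 then Neg else if x == 0 then Zero else Pos.

Definition Sign {R : realDomainType} (f : {poly R}) : seq sign := map sgn f.

Definition dpoly {R : realDomainType} (f : {poly R}) : nat := dfrak (Sign f).

Definition nonneg_poly {R : realDomainType} (f : {poly R}) : Prop :=
  forall i, 0 <= f`_i.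

Definition interpolates {R : realDomainType} {n : nat} (a b : 'I_n -> R)
  (T : {set 'I_n}) (f : {poly R}) : Prop :=
  forall i, i \in T -> f.[a i] = b i.

Definition minimal_poly {R : realDomainType} {n : nat} (a b : 'I_n -> R)
  (T : {set 'I_n}) (f : {poly R}) : Prop :=
  nonneg_poly f /\ interpolates a b T f /\ (dpoly f <= #|T|)%N.

From HB Require Import structures.
From mathcomp Require Import all_boot all_order all_algebra.
From mathcomp Require Import reals boolp.
From mathcomp Require Import zify lra.
From Stdlib Require Import ClassicalEpsilon.
Set Implicit Arguments. Unset Strict Implicit. Unset Printing Implicit Defensive.
Import Order.TTheory GRing.Theory Num.Theory.
Local Open Scope ring_scope.

(* The number SC t of sign changes of t is the largest k for which t has an
   alternating chain: positions e 0 < ... < e k carrying nonzero, consecutively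
   opposite signs.  If g <> f are two nonnegative interpolants, f - g has n
   positive roots, so by Descartes' rule of signs Sign (f - g) has n sign
   changes; as f, g >= 0 it is admissible for Sign f, whence d(f) >= n and f
   cannot be minimal for a proper subset.  Conversely, if d(f) >= n, an
   admissible t has a chain of n + 1 positions; linear algebra gives a nonzero
   h supported on them vanishing at the n nodes, Descartes forces its
   coefficients to alternate along the chain, so after rescaling h is positive
   only where f is, and f - eps h is a second nonnegative interpolant.  Thus
   uniqueness means d(f) <= n - 1, the size of S minus one point. *)

Fixpoint first_nonzero (t : seq sign) : sign :=
  if t is x :: t' then (if is_zero x then first_nonzero t' else x) else Zero.

Lemma forall_ord_succ j (P : nat -> bool) :
  P 0%N -> [forall k : 'I_j.+1, P k] = [forall k : 'I_j, P k.+1].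
Proof.
move=> P0; apply/forallP/forallP => allP k; first exact: (allP (lift ord0 k)).
by case: k => -[|k] // ltkj; exact: (allP (Ordinal (ltkj : (k < j)%N))).
Qed.

Lemma SC_nil : SC [::] = 0%N.
Proof. by rewrite /SC big_ord0. Qed.

Lemma sum_opp_first_nonzero x t :
  (\sum_(j < size t) (opp_signs x (nth Zero t j) &&
      [forall k : 'I_j, is_zero (nth Zero t k)]))%N = opp_signs x (first_nonzero t).
Proof.
elim: t => [|y t IH] /=; first by rewrite big_ord0; case: x.
rewrite big_ord_recl /=.
have -> : [forall k : 'I_0, is_zero (nth Zero (y :: t) k)] by apply/forallP => -[].
case y0: (is_zero y).
- rewrite -IH (_ : opp_signs x y = false) ?add0n; last by move: y0; clear IH; case: x; case: y.
  by apply: eq_bigr => j _; rewrite (@forall_ord_succ j (fun k => is_zero (nth Zero (y :: t) k))).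
- rewrite big1 ?addn0 ?andbT // => j _.
  case: forallP => [all0|]; last by rewrite andbF.
  by have := all0 ord0; rewrite /= y0.
Qed.

Lemma SC_cons x t : SC (x :: t) = (SC t + opp_signs x (first_nonzero t))%N.
Proof.
rewrite /SC /= big_ord_recl big_ord0 add0n -(sum_opp_first_nonzero x t) -big_split.
apply: eq_bigr => j _; rewrite big_ord_recl /= addnC.
rewrite (@forall_ord_succ j (fun k => (0 < k)%N ==> is_zero (nth Zero (x :: t) k))) //.
congr (_ + (_ && _))%N; apply: eq_bigr => i _.
by rewrite (@forall_ord_succ j (fun k => (i.+1 < k)%N ==> is_zero (nth Zero (x :: t) k))).
Qed.

Lemma SC_eq0 t : is_zero (first_nonzero t) -> SC t = 0%N.
Proof.
elim: t => [|x t IH] /=; first by rewrite SC_nil.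
by rewrite SC_cons; case: x => //= /IH ->.
Qed.

Lemma first_nonzero_cat s u : first_nonzero (s ++ u) =
  if is_zero (first_nonzero s) then first_nonzero u else first_nonzero s.
Proof. by elim: s => [|x s IH] //=; case: x. Qed.

Lemma opp_signs_trans x y z :
  ~~ is_zero y -> (opp_signs x z <= opp_signs x y + opp_signs y z)%N.
Proof. by case: x; case: y; case: z. Qed.

Lemma SC_cat s u : (SC u + opp_signs (first_nonzero s) (first_nonzero u) <= SC (s ++ u))%N.
Proof.
elim: s => [|x s IH] /=; first by case: (first_nonzero u); rewrite addn0.
rewrite SC_cons first_nonzero_cat.
case: ifP => [x0 | _]; first by case: x x0 => // _; rewrite addn0.
case: ifP => fs0.
- by move: IH; case: (first_nonzero s) fs0 => //= _; lia.
- by move: IH (@opp_signs_trans x _ (first_nonzero u) (negbT fs0)); lia.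
Qed.

Lemma SC_drop m t : (SC (drop m t) <= SC t)%N.
Proof.
by rewrite -{2}(cat_take_drop m t); have := SC_cat (take m t) (drop m t); lia.
Qed.

Definition isPos (s : sign) : bool := if s is Pos then true else false.

Lemma SC_le_count_Pos t : (SC t + isPos (first_nonzero t) <= 2 * count isPos t)%N.
Proof.
elim: t => [|x t IH] /=; first by rewrite SC_nil.
by rewrite SC_cons; case: x => /=; move: IH; case: (first_nonzero t) => /=; lia.
Qed.

Lemma count_Pos_admissible s t :
  (forall i, admissible (nth Zero s i) (nth Zero t i)) -> (count isPos t <= size s)%N.
Proof.
elim: t s => [|x t IH] s adm //=; case: s adm => [|y s] adm /=.
- have -> : isPos x = false by have [|[|]] := adm 0%N; rewrite /= ?nth_nil => ->.
  by apply: (IH [::]) => i; have := adm i.+1; rewrite /= !nth_nil.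
- by have := IH s (fun i => adm i.+1); case: (isPos x); lia.
Qed.

Lemma natmaxP (P : nat -> Prop) m k : (forall i, P i -> (i <= m)%N) -> P k ->
  P (natmax P) /\ forall i, P i -> (i <= natmax P)%N.
Proof.
move=> ub Pk; apply: (epsilon_spec _ (fun n => P n /\ forall i, P i -> (i <= n)%N)).
have exP : exists i, `[< P i >] by exists k; apply/asboolP.
have ubP i : `[< P i >] -> (i <= m)%N by move/asboolP/ub.
case: (ex_maxnP exP ubP) => i /asboolP Pi maxi.
by exists i; split=> // j Pj; apply/maxi/asboolP.
Qed.

Definition admissible_SC (s : seq sign) (n : nat) : Prop :=
  exists t : seq sign, (forall i, admissible (nth Zero s i) (nth Zero t i)) /\ SC t = n.

Lemma dfrakP s : admissible_SC s (dfrak s) /\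
  forall n, admissible_SC s n -> (n <= dfrak s)%N.
Proof.
apply: (@natmaxP _ (2 * size s) 0%N).
- move=> _ [t [adm <-]].
  by have := SC_le_count_Pos t; have := count_Pos_admissible adm; lia.
- by exists [::]; split; [move=> i; rewrite nth_nil; right; left | exact: SC_nil].
Qed.

Definition alt_chain (u : nat -> sign) (k : nat) (e : nat -> nat) : Prop :=
  (forall j, (j <= k)%N -> ~~ is_zero (u (e j))) /\
  (forall j, (j < k)%N -> (e j < e j.+1)%N /\ opp_signs (u (e j)) (u (e j.+1))).

Lemma alt_chain_behead u k e : alt_chain u k.+1 e -> alt_chain u k (fun j => e j.+1).
Proof. by case=> nz alt; split=> j lejk; [exact: nz | exact: alt]. Qed.

Lemma alt_chain_cons x t k e : alt_chain (nth Zero t) k e ->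
  alt_chain (nth Zero (x :: t)) k (fun j => (e j).+1).
Proof. by []. Qed.

Lemma alt_chain_le u k m e : (m <= k)%N -> alt_chain u k e -> alt_chain u m e.
Proof.
move=> lemk [nz alt]; split=> j lejm; [apply: nz | apply: alt]; exact: leq_trans lemk.
Qed.

Lemma alt_chain_eq_on u k e e' : (forall j, (j <= k)%N -> e' j = e j) ->
  alt_chain u k e' -> alt_chain u k e.
Proof.
move=> eq_e [nz alt]; split=> j ltjk; rewrite -!eq_e //; [exact: nz | exact: alt | exact: ltnW].
Qed.

Lemma opp_signs_inj x y z : opp_signs x y -> opp_signs x z -> y = z.
Proof. by case: x; case: y; case: z. Qed.

Lemma alt_chain_eq u v k e : alt_chain u k e -> alt_chain v k e ->
  u (e 0%N) = v (e 0%N) -> forall j, (j <= k)%N -> u (e j) = v (e j).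
Proof.
move=> [_ alt_u] [_ alt_v] eq0; elim=> // j IH ltjk.
have [_ /opp_signs_inj opp_u] := alt_u j ltjk; have [_ opp_v] := alt_v j ltjk.
by apply: opp_u; rewrite IH // ltnW.
Qed.

Lemma drop_nonzero t m : ~~ is_zero (nth Zero t m) ->
  drop m t = nth Zero t m :: drop m.+1 t.
Proof.
move=> nz; apply: drop_nth; rewrite ltnNge; apply: contra nz => le_tm.
by rewrite nth_default.
Qed.

Lemma chain_le_SC_drop t k e :
  alt_chain (nth Zero t) k e -> (k <= SC (drop (e 0%N) t))%N.
Proof.
elim: k e => // k IH e chain; have [nz alt] := chain.
have {}IH := IH _ (alt_chain_behead chain); have [lt01 opp01] := alt 0%N isT.
have -> : drop (e 0%N) t = take (e 1%N - e 0%N) (drop (e 0%N) t) ++ drop (e 1%N) t.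
  by rewrite -{1}(cat_take_drop (e 1%N - e 0%N) (drop (e 0%N) t)) drop_drop subnK // ltnW.
move: IH (SC_cat (take (e 1%N - e 0%N) (drop (e 0%N) t)) (drop (e 1%N) t)).
rewrite (drop_nonzero (nz 1%N isT)) (drop_nonzero (nz 0%N isT)) -(subnSK lt01) /=.
by rewrite (negbTE (nz 0%N isT)) (negbTE (nz 1%N isT)) opp01; lia.
Qed.

Lemma chain_le_SC t k e : alt_chain (nth Zero t) k e -> (k <= SC t)%N.
Proof. by move/chain_le_SC_drop/leq_trans; apply; apply: SC_drop. Qed.

Lemma nonzero_not_opp_eq x y :
  ~~ is_zero x -> ~~ is_zero y -> ~~ opp_signs x y -> x = y.
Proof. by case: x; case: y. Qed.

Lemma chain_of_SC t : ~~ is_zero (first_nonzero t) ->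
  exists e, alt_chain (nth Zero t) (SC t) e /\ nth Zero t (e 0%N) = first_nonzero t.
Proof.
elim: t => [|x t IH] //=; rewrite SC_cons.
have [x0 /IH [e [chain he]] | nzx _] := boolP (is_zero x).
  exists (fun j => (e j).+1); rewrite (_ : opp_signs _ _ = false) ?addn0.
    by split; [exact: alt_chain_cons|].
  by case: x x0.
have [ft0 | /IH [e [chain he]]] := boolP (is_zero (first_nonzero t)).
  exists (fun _ => 0%N); rewrite SC_eq0 //.
  rewrite (_ : opp_signs _ _ = false); last by case: x nzx; case: (first_nonzero t) ft0.
  by split=> //; split=> // j; case: j.
case opp: (opp_signs x (first_nonzero t)); last first.
  exists (fun j => (e j).+1); rewrite addn0; split; first exact: alt_chain_cons.
  by rewrite /= he; apply/esym/nonzero_not_opp_eq; rewrite ?opp -?he ?(chain.1 0%N).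
exists (fun j => if j is j'.+1 then (e j').+1 else 0%N); rewrite addn1; split=> //.
have [nz alt] := chain; split=> [[|j] lejk | [|j] ltjk] //=; first exact: nz.
  by rewrite he.
exact: alt.
Qed.

Lemma exists_switch (P : nat -> bool) m m' : P m -> ~~ P m' -> (m < m')%N ->
  exists t, (m <= t < m')%N /\ P t /\ ~~ P t.+1.
Proof.
elim: m' => // m' IH Pm Pm'; rewrite ltnS leq_eqVlt => /predU1P[eq_mm' | ltmm'].
  by subst m'; exists m; rewrite leqnn ltnSn.
have [Pm'0 | nPm'] := boolP (P m'); first by exists m'; rewrite (ltnW ltmm') ltnSn.
have [t [/andP[lemt ltt] Pt]] := IH Pm nPm' ltmm'.
by exists t; rewrite lemt /= ltnS ltnW.
Qed.

Section IncreasingIndices.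
Variables (e : nat -> nat) (k : nat).
Hypothesis e_incr : forall j, (j < k)%N -> (e j < e j.+1)%N.

Lemma incr_ltn i j : (i < j)%N -> (j <= k)%N -> (e i < e j)%N.
Proof.
elim: j => // j IH; rewrite ltnS leq_eqVlt => /predU1P[-> | ltij] ltjk.
  exact: e_incr.
exact: ltn_trans (IH ltij (ltnW ltjk)) (e_incr ltjk).
Qed.

Lemma sorted_incr : sorted ltn [seq e j | j <- iota 0 k.+1].
Proof.
apply: (@homo_sorted_in _ _ (fun j => (j <= k)%N)); last exact: iota_ltn_sorted.
  by move=> i j _ /= lejk ltij; exact: incr_ltn.
by apply/allP => j; rewrite mem_iota.
Qed.

End IncreasingIndices.

Lemma incr_eq (e e' : nat -> nat) n :
  (forall j, (j < n)%N -> (e j < e j.+1)%N) ->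
  (forall j, (j < n)%N -> (e' j < e' j.+1)%N) ->
  (forall j, (j <= n)%N -> e' j \in [seq e l | l <- iota 0 n.+1]) ->
  forall j, (j <= n)%N -> e' j = e j.
Proof.
move=> e_incr e'_incr sub j lejn.
have sorted_e := sorted_incr e_incr; have sorted_e' := sorted_incr e'_incr.
have /(irr_sorted_eq ltn_trans ltnn sorted_e' sorted_e) eq_e :
    [seq e' l | l <- iota 0 n.+1] =i [seq e l | l <- iota 0 n.+1].
  apply: (uniq_min_size _ _ _).2; rewrite ?size_map //.
  - by move: sorted_e'; rewrite ltn_sorted_uniq_leq => /andP[].
  - by move=> x /mapP[l]; rewrite mem_iota => /andP[_ ltln] ->; exact: sub.
have := congr1 (fun s => nth 0%N s j) eq_e.
by rewrite !(nth_map 0%N) ?size_iota // nth_iota.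
Qed.

Section Descartes.
Variable R : realDomainType.
Implicit Types (p q : {poly R}) (x y : R).

Lemma nth_Sign p i : nth Zero (Sign p) i = sgn p`_i.
Proof.
rewrite /Sign; have [ltis | leis] := ltnP i (size p); first by rewrite (nth_map 0).
by rewrite !nth_default ?size_map // /sgn ltxx eqxx.
Qed.

Lemma is_zero_sgn x : is_zero (sgn x) = (x == 0).
Proof. by rewrite /sgn; case: (ltrgt0P x). Qed.

Lemma sgn_Pos x : sgn x = Pos -> 0 < x.
Proof. by rewrite /sgn; case: (ltrgt0P x). Qed.

Lemma opp_sgn x y : opp_signs (sgn x) (sgn y) = (x * y < 0).
Proof.
rewrite /sgn; case: (ltrgt0P x) => x0; case: (ltrgt0P y) => y0 /=; apply/esym;
  first [by apply/idP; nra | by apply/negbTE; rewrite -leNgt; nra].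
Qed.

Lemma sqr_gt0 x : x != 0 -> 0 < x * x.
Proof. by move=> x_nz; rewrite -expr2 exprn_even_gt0. Qed.

Lemma alt_chain_SignP p k e : alt_chain (nth Zero (Sign p)) k e <->
  (forall j, (j <= k)%N -> p`_(e j) != 0) /\
  (forall j, (j < k)%N -> (e j < e j.+1)%N /\ p`_(e j) * p`_(e j.+1) < 0).
Proof.
rewrite /alt_chain; split=> -[nz alt]; split=> j jk.
- by rewrite -is_zero_sgn -nth_Sign nz.
- by rewrite -opp_sgn -!nth_Sign; exact: alt.
- by rewrite nth_Sign is_zero_sgn nz.
- by rewrite !nth_Sign opp_sgn; exact: alt.
Qed.

Lemma mul_lt0_flip a x y : a * x < 0 -> 0 < a * y -> x * y < 0.
Proof. by case: (ltrgt0P a) => ? ? ?; nra. Qed.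

Lemma mul_lt0_transfer a b x y : 0 < a * x -> 0 < b * y -> a * b < 0 -> x * y < 0.
Proof. by case: (ltrgt0P a) => ?; case: (ltrgt0P b) => ? ? ? ?; nra. Qed.

Lemma sgn_scale_to x s : x != 0 -> ~~ is_zero s -> exists2 c, c != 0 & sgn (c * x) = s.
Proof.
move=> x_nz; have x2_gt0 := sqr_gt0 x_nz; case: s => // _.
  by exists (- x); rewrite ?oppr_eq0 // /sgn mulNr oppr_lt0 x2_gt0.
by exists x; rewrite // /sgn ltNge ltW //= gt_eqF.
Qed.

Lemma alt_chain_scale p c k e : c != 0 ->
  alt_chain (nth Zero (Sign p)) k e -> alt_chain (nth Zero (Sign (c *: p))) k e.
Proof.
move=> c_nz /alt_chain_SignP[nz alt]; apply/alt_chain_SignP; split=> j ltjk.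
  by rewrite coefZ mulf_neq0 // nz.
have [lt_e opp] := alt j ltjk; split=> //.
by rewrite !coefZ mulrACA pmulr_rlt0 // sqr_gt0.
Qed.

Lemma sign_block_end p m m' : p`_m != 0 -> (m < m')%N -> p`_m * p`_m' <= 0 ->
  exists t, [/\ (m <= t < m')%N, 0 < p`_m * p`_t & p`_m * p`_t.+1 <= 0].
Proof.
move=> nz lt_m le0; have [|t [le_t [Pt Pt1]]] :=
  exists_switch (P := fun i => 0 < p`_m * p`_i) (sqr_gt0 nz) _ lt_m.
  by rewrite -leNgt.
by exists t; split; rewrite // leNgt.
Qed.

Section MulXsubC.
Variables (q : {poly R}) (r : R).
Hypothesis r_gt0 : 0 < r.

Lemma coef_mulXsubC i :
  (('X - r%:P) * q)`_i = (if i is i'.+1 then q`_i' else 0) - r * q`_i.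
Proof. by rewrite mulrBl coefB coefXM coefCM; case: i. Qed.

Lemma coef_mulXsubC_gt0 u t : 0 < u * q`_t -> u * q`_t.+1 <= 0 ->
  0 < u * (('X - r%:P) * q)`_t.+1.
Proof. by rewrite coef_mulXsubC /= => ? ?; have := r_gt0; nra. Qed.

Lemma coef_mulXsubC_lt0 u i : 0 < u * q`_i -> (i = 0%N \/ u * q`_i.-1 <= 0) ->
  u * (('X - r%:P) * q)`_i < 0.
Proof. by rewrite coef_mulXsubC; case: i => [|i] /= ? [] // ?; have := r_gt0; nra. Qed.

Lemma alt_chain_mulXsubC v e : alt_chain (nth Zero (Sign q)) v e ->
  exists e', alt_chain (nth Zero (Sign (('X - r%:P) * q))) v.+1 e'.
Proof.
move=> /alt_chain_SignP[nz alt]; set c := ('X - r%:P) * q.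
(* As r > 0, c changes sign right after the last index [top j] of the sign
   block of q starting at e j, and once more at the first index i0 of the
   block containing e 0. *)
have block j : exists t, (j <= v)%N -> [/\ (e j <= t)%N, 0 < q`_(e j) * q`_t,
    q`_(e j) * q`_t.+1 <= 0 & (j < v)%N -> (t < e j.+1)%N].
  case: (ltngtP j v) => [ltjv | _ | ->]; [|by exists 0%N|].
    have [lt_e /ltW opp] := alt j ltjv.
    have [t [/andP[le_t lt_t] Pt Pt1]] := sign_block_end (nz j (ltnW ltjv)) lt_e opp.
    by exists t.
  have lt_size : (e v < size q)%N.
    by rewrite ltnNge; apply: contra (nz v (leqnn v)) => /(nth_default 0) ->.
  have [|t [/andP[le_t _] Pt Pt1]] := sign_block_end (nz v (leqnn v)) lt_size.
    by rewrite (nth_default 0 (leqnn _)) mulr0.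
  by exists t; split; rewrite ?ltnn.
have [top top_spec] := choice _ block.
have exP0 : exists i, 0 < q`_(e 0%N) * q`_i by exists (e 0%N); exact: sqr_gt0 (nz 0%N isT).
case: (ex_minnP exP0) => i0 Pi0 min_i0.
have first : q`_(e 0%N) * c`_i0 < 0.
  apply: coef_mulXsubC_lt0 => //; case: i0 Pi0 min_i0 => [|i] _ min_i; [by left | right].
  by rewrite leNgt; apply: contraL (ltnSn i) => /min_i; rewrite leqNgt.
have tops j : (j <= v)%N -> 0 < q`_(e j) * c`_(top j).+1.
  by move=> /top_spec[_ Pt Pt1 _]; exact: coef_mulXsubC_gt0.
exists (fun j => if j is j'.+1 then (top j').+1 else i0); apply/alt_chain_SignP.
split=> [[|j] lejv | [|j] ltjv] /=.
- by apply: contraTneq first => ->; rewrite mulr0 ltxx.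
- by apply: contraTneq (tops j lejv) => ->; rewrite mulr0 ltxx.
- split; last exact: mul_lt0_flip first (tops 0%N isT).
  have [le_t _ _ _] := top_spec 0%N isT.
  by rewrite ltnS (leq_trans (min_i0 _ (sqr_gt0 (nz 0%N isT)))).
- have [_ _ _ lt_t] := top_spec j (ltnW ltjv); have [le_t _ _ _] := top_spec j.+1 ltjv.
  split; first by rewrite ltnS (leq_trans (lt_t ltjv)).
  exact: mul_lt0_transfer (tops j (ltnW ltjv)) (tops j.+1 ltjv) (alt j ltjv).2.
Qed.

End MulXsubC.

Lemma descartes_alt_chain p (rs : seq R) : p != 0 -> uniq rs ->
  {in rs, forall x, 0 < x /\ root p x} ->
  exists e, alt_chain (nth Zero (Sign p)) (size rs) e.
Proof.
elim: rs p => [|r rs IH] p p_nz /=.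
  move=> _ _; exists (fun _ => (size p).-1); apply/alt_chain_SignP.
  by split=> // j _; rewrite -lead_coefE lead_coef_eq0.
move=> /andP[r_rs uniq_rs] roots; have [r_gt0 /factor_theorem[q def_p]] := roots r (mem_head _ _).
have q_nz : q != 0 by apply: contraNneq p_nz => q0; rewrite def_p q0 mul0r.
have rootsq x : x \in rs -> 0 < x /\ root q x.
  move=> x_rs; have [x_gt0] := roots x (mem_behead (s := r :: rs) x_rs).
  rewrite def_p rootM root_XsubC => /orP[//|/eqP x_r].
  by move: r_rs; rewrite -x_r x_rs.
have [e chain] := IH q q_nz uniq_rs rootsq.
by rewrite def_p mulrC; exact: alt_chain_mulXsubC chain.
Qed.

Lemma alt_chain_of_roots n (a : 'I_n -> R) p : (forall i, 0 < a i) -> injective a ->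
  p != 0 -> (forall i, p.[a i] = 0) -> exists e, alt_chain (nth Zero (Sign p)) n e.
Proof.
move=> a_gt0 a_inj p_nz roots.
have [|x /mapP[i _ ->]|e] := @descartes_alt_chain p [seq a i | i <- enum 'I_n] p_nz.
- by rewrite map_inj_uniq // enum_uniq.
- by split; [exact: a_gt0 | exact/eqP/roots].
by rewrite size_map size_enum_ord; exists e.
Qed.

End Descartes.

Lemma exists_poly_vanishing (F : fieldType) n (a : 'I_n -> F) (s : seq nat) :
  uniq s -> (n < size s)%N ->
  exists h : {poly F}, [/\ h != 0, forall i, h.[a i] = 0 & forall k, h`_k != 0 -> k \in s].
Proof.
move=> uniq_s lt_ns; pose A : 'M[F]_(size s, n) := \matrix_(j, i) a i ^+ nth 0%N s j.
have /rowV0Pn[w /sub_kermxP wA w_nz] : kermx A != 0.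
  by rewrite kermx_eq0 /row_free; apply: contraTN lt_ns => /eqP <-; rewrite -leqNgt rank_leq_col.
pose h := \sum_(j < size s) w 0 j *: 'X^(nth 0%N s j).
have coef_h k : h`_k = \sum_(j < size s) w 0 j * (k == nth 0%N s j)%:R.
  by rewrite coef_sum; apply: eq_bigr => j _; rewrite coefZ coefXn.
have coef_h_nth (j : 'I_(size s)) : h`_(nth 0%N s j) = w 0 j.
  rewrite coef_h (bigD1 j) //= eqxx mulr1 big1 ?addr0 // => l ne_lj.
  by rewrite nth_uniq // val_eqE eq_sym (negbTE ne_lj) mulr0.
exists h; split.
- apply: contraNneq w_nz => h0; apply/eqP/rowP => j.
  by rewrite mxE -coef_h_nth h0 coef0.
- move=> i; have := congr1 (fun M : 'rV_n => M 0 i) wA; rewrite !mxE => <-.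
  by rewrite horner_sum; apply: eq_bigr => j _; rewrite hornerZ hornerXn mxE.
- move=> k; rewrite coef_h; apply: contraR => k_s; rewrite big1 // => j _.
  by rewrite (_ : (k == _) = false) ?mulr0 //; apply: contraNF k_s => /eqP ->; exact: mem_nth.
Qed.

Lemma nonneg_poly_sub (R : realFieldType) (f h : {poly R}) : nonneg_poly f ->
  (forall k, 0 < h`_k -> 0 < f`_k) -> exists2 eps, 0 < eps & nonneg_poly (f - eps *: h).
Proof.
move=> f_ge0 f_pos; pose ratio k := if 0 < h`_k then h`_k / f`_k else 0.
have ratio_ge0 k : 0 <= ratio k.
  by rewrite /ratio; case: ifP => // /[dup] /f_pos ? ?; apply: divr_ge0; exact: ltW.
pose K := \sum_(k < size h) ratio k.
have K_ge0 : 0 <= K by apply: sumr_ge0.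
exists (1 + K)^-1; first by rewrite invr_gt0; lra.
move=> k; rewrite coefB coefZ subr_ge0; have [h_pos | h_le0] := ltrP 0 h`_k; last first.
  by apply: le_trans (f_ge0 k); rewrite pmulr_rle0 // invr_gt0; lra.
have lt_k_size : (k < size h)%N.
  by rewrite ltnNge; apply: contraTN h_pos => /(nth_default 0) ->; rewrite ltxx.
have ratio_le_K : ratio k <= K.
  rewrite /K (bigD1 (Ordinal lt_k_size)) //= lerDl.
  by apply: sumr_ge0 => l _.
have f_k_pos := f_pos k h_pos.
have def_h : h`_k = ratio k * f`_k by rewrite /ratio h_pos divfK // gt_eqF.
rewrite -(ler_pM2l (_ : 0 < 1 + K)); last by lra.
by rewrite mulrA mulfV ?mul1r; [rewrite def_h; nra | apply/lt0r_neq0; lra].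
Qed.

Section Interpolation.
Variables (R : realFieldType) (n : nat) (a b : 'I_n -> R).
Hypotheses (a_gt0 : forall i, 0 < a i) (a_inj : injective a).

Lemma vanishing_poly_along_chain t e : alt_chain (nth Zero t) n e ->
  exists h : {poly R}, [/\ forall i, h.[a i] = 0,
    forall k, h`_k != 0 -> exists2 j, (j <= n)%N & k = e j &
    forall j, (j <= n)%N -> sgn h`_(e j) = nth Zero t (e j)].
Proof.
move=> chain; have e_incr j (ltjn : (j < n)%N) := ((chain.2 j ltjn).1).
have uniq_s : uniq [seq e j | j <- iota 0 n.+1].
  by have := sorted_incr e_incr; rewrite ltn_sorted_uniq_leq => /andP[].
have [|h [h_nz h_roots h_supp]] := exists_poly_vanishing a uniq_s.
  by rewrite size_map size_iota.
have [e' chain'] := alt_chain_of_roots a_gt0 a_inj h_nz h_roots.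
(* The n sign changes of h all live on its n + 1 support positions. *)
have e'_eq : forall j, (j <= n)%N -> e' j = e j.
  apply: incr_eq e_incr (fun j ltjn => ((chain'.2 j ltjn).1)) _ => j lejn.
  by apply: h_supp; move: chain' => /alt_chain_SignP[nz _]; exact: nz.
have {chain'}chain_h := alt_chain_eq_on e'_eq chain'.
have [c c_nz sgn_c] : exists2 c, c != 0 & sgn (c * h`_(e 0%N)) = nth Zero t (e 0%N).
  by apply: sgn_scale_to (chain.1 0%N isT); move: chain_h => /alt_chain_SignP[nz _]; exact: nz.
exists (c *: h); split.
- by move=> i; rewrite hornerZ h_roots mulr0.
- move=> k; rewrite coefZ mulf_eq0 negb_or => /andP[_ /h_supp /mapP[j]].
  by rewrite mem_iota => /andP[_ ltjn] ->; exists j.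
- move=> j lejn; rewrite -nth_Sign.
  by apply: alt_chain_eq (alt_chain_scale c_nz chain_h) chain _ j lejn; rewrite nth_Sign coefZ.
Qed.

Lemma other_interpolant_of_chain f t e : nonneg_poly f -> interpolates a b setT f ->
  (forall i, admissible (nth Zero (Sign f) i) (nth Zero t i)) ->
  alt_chain (nth Zero t) n e ->
  exists2 g, g != f & nonneg_poly g /\ interpolates a b setT g.
Proof.
move=> f_ge0 f_interp adm chain.
have [h [h_roots h_supp h_sgn]] := vanishing_poly_along_chain chain.
have f_pos k : 0 < h`_k -> 0 < f`_k.
  move=> h_pos; have [j lejn def_k] := h_supp k (lt0r_neq0 h_pos).
  have t_Pos : nth Zero t k = Pos by rewrite def_k -h_sgn // -def_k /sgn ltNge ltW //= gt_eqF.
  by have := adm k; rewrite t_Pos nth_Sign => -[|[]] // /esym /sgn_Pos.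
have [eps eps_gt0 g_ge0] := nonneg_poly_sub f_ge0 f_pos.
exists (f - eps *: h); last split=> // i _.
  rewrite -subr_eq0 addrAC subrr add0r oppr_eq0 scaler_eq0 negb_or gt_eqF //=.
  apply: contraNneq (chain.1 0%N isT) => h0.
  by rewrite -h_sgn // h0 coef0 /sgn ltxx eqxx.
by rewrite hornerD hornerN hornerZ h_roots mulr0 subr0 f_interp ?in_setT.
Qed.

Lemma admissible_Sign_sub (f g : {poly R}) : nonneg_poly f -> nonneg_poly g ->
  forall i, admissible (nth Zero (Sign f) i) (nth Zero (Sign (f - g)) i).
Proof.
move=> f_ge0 g_ge0 i; rewrite /admissible !nth_Sign coefB.
have [d_gt0 | d_lt0 | ->] := ltrgt0P (f`_i - g`_i).
- have f_gt0 : 0 < f`_i by have := g_ge0 i; lra.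
  by right; right; rewrite /sgn !ltNge !ltW //= !gt_eqF.
- by left; rewrite /sgn d_lt0.
- by right; left; rewrite /sgn ltxx eqxx.
Qed.

Lemma nonneg_interpolant_unique f g : nonneg_poly f -> nonneg_poly g ->
  interpolates a b setT f -> interpolates a b setT g -> (dpoly f < n)%N -> g = f.
Proof.
move=> f_ge0 g_ge0 f_interp g_interp; apply: contraTeq; rewrite eq_sym -subr_eq0 -leqNgt => fg_nz.
have roots i : (f - g).[a i] = 0.
  by rewrite hornerD hornerN f_interp ?g_interp ?in_setT // subrr.
have [e chain] := alt_chain_of_roots a_gt0 a_inj fg_nz roots.
apply: leq_trans (chain_le_SC chain) _; apply: (dfrakP _).2.
by exists (Sign (f - g)); split=> //; exact: admissible_Sign_sub.
Qed.

End Interpolation.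

Theorem mainTheorem5 (R : realType) (n : nat) (a b : 'I_n -> R)
  (ha : forall i, 0 < a i) (hb : forall i, 0 <= b i)
  (hinc : forall i j : 'I_n, (i < j)%N -> a i < a j)
  (f : {poly R}) (hf : nonneg_poly f) (hfS : interpolates a b setT f) :
  (forall g : {poly R}, nonneg_poly g -> interpolates a b setT g -> g = f) <->
  (exists T : {set 'I_n}, T \proper setT /\ minimal_poly a b T f).
Proof.
have a_inj : injective a.
  by move=> i j eq_a; apply/val_inj; case: (ltngtP i j) => // /hinc; rewrite eq_a ltxx.
split=> [unique | [T [T_proper [_ [_ dT]]]] g g_ge0 g_interp]; last first.
  apply: (nonneg_interpolant_unique ha a_inj hf g_ge0 hfS g_interp).
  by apply: leq_ltn_trans dT _; rewrite -[n in (_ < n)%N]card_ord -cardsT proper_card.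
case: n a b ha hb hinc hf hfS unique a_inj => [|n] a b ha _ _ hf hfS unique a_inj.
  suff /eqP : f + 1 = f by rewrite addrC -subr_eq0 addrK oner_eq0.
  by apply: unique => [i | []//]; rewrite coefD coef1 addr_ge0 ?ler0n.
exists [set~ ord0]; split.
  by apply/properP; split; [exact: subsetT | exists ord0; rewrite !inE ?eqxx].
split=> //; split; first by move=> i _; exact: hfS.
rewrite cardsC1 card_ord leqNgt; apply/negP => lt_n_df.
have [[t [adm SC_t]] _] := dfrakP (Sign f).
have t_nz : ~~ is_zero (first_nonzero t).
  by apply: contraTN lt_n_df => /SC_eq0; rewrite SC_t /dpoly => ->.
have [e [chain _]] := chain_of_SC t_nz.
have le_n_SC : (n.+1 <= SC t)%N by rewrite SC_t.
have [g g_ne_f [g_ge0 g_interp]] :=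
  other_interpolant_of_chain ha a_inj hf hfS adm (alt_chain_le le_n_SC chain).
by move: g_ne_f; rewrite (unique g g_ge0 g_interp) eqxx.
Qed.
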